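(* Let $D\ge1$, let $\sigma_1^2,\sigma_2^2>0$, $c'>0$, and for $k=1,\dots,D$ let $\alpha_k>0$, $\beta_k>0$, $q_k>0$ be fixed. Consider the problem in the variables $d_1,\dots,d_D\ge0$ and $0\le\varepsilon\le1$: $$\max\;\tilde f(\varepsilon,\{d_k\})=\frac{1-\varepsilon}{2}\sum_{k=1}^D\log_2\frac{\left(1+\frac{\alpha_k}{\sigma_1^2}q_k\right)\left(1+\frac{\beta_k}{\sigma_2^2}d_k\right)}{1+\frac{\alpha_k}{\sigma_1^2}q_k+\frac{\beta_k}{\sigma_2^2}d_k}\quad\text{s.t.}\quad \tilde g(\varepsilon,\{d_k\})=\varepsilon c'-\frac{1-\varepsilon}{2}\sum_{k=1}^D d_k\ge0.$$ For $\mu_1>0$ define $$d_k(\mu_1)=\frac{\sigma_2^2}{2\beta_k}\left(\sqrt{\left(\frac{q_k\alpha_k}{\sigma_1^2}\right)^2+\frac{4q_k\alpha_k\beta_k\mu_1}{\sigma_1^2\sigma_2^2\ln2}}-\frac{q_k\alpha_k}{\sigma_1^2}-2\right)^+$$ and $$\tilde l(\mu_1)=-\frac12\sum_{k=1}^D\log_2\frac{\left(1+\frac{\alpha_k}{\sigma_1^2}q_k\right)\left(1+\frac{\beta_k}{\sigma_2^2}d_k(\mu_1)\right)}{1+\frac{\alpha_k}{\sigma_1^2}q_k+\frac{\beta_k}{\sigma_2^2}d_k(\mu_1)}+\frac1{\mu_1}\left[c'+\frac12\sum_{k=1}^D d_k(\mu_1)\right].$$ Then there exists $\mu_1^*>0$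 with $\tilde l(\mu_1^* )=0$, and for any such $\mu_1^*$ the point $d_k^*=d_k(\mu_1^* )$, $$\varepsilon^*=\frac{\sum_{k=1}^D d_k^*}{2c'+\sum_{k=1}^D d_k^*},$$ is feasible with $\tilde g(\varepsilon^*,\{d_k^*\})=0$ and, with multiplier $\nu_1=1/\mu_1^*$ on $\tilde g\ge0$ and suitable multipliers $\lambda_k\ge0$ on $d_k\ge0$, satisfies the Karush–Kuhn–Tucker conditions of this problem.
   Context: This is the subproblem, with the source power allocation $q_k$ fixed, of the joint source/relay/TS-ratio design for an energy-harvesting MIMO relay: $\alpha_k,\beta_k$ are squared singular values of the source–relay and relay–destination channels, $d_k$ are transformed relay power variables, $\varepsilon$ is the time-switching ratio, and $c'=\eta(g_1P_0+\sigma_1^2D)>0$ is the harvested-energy constant ($\eta\in(0,1]$ conversion efficiency, $g_1$ largest squared singular value of the energy-phase channel, $P_0$ energy-phase transmit power). *)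

From Stdlib Require Export Reals Lra.
Open Scope R_scope.

(* Finite sum over indices 0..n-1 (index k = 0..D-1 stands for k = 1..D). *)
Fixpoint rsum (n : nat) (f : nat -> R) : R :=
  match n with
  | O => 0
  | S m => rsum m f + f m
  end.

Definition log2 (x : R) : R := ln x / ln 2.

Definition pos_part (x : R) : R := Rmax 0 x.

Definition upd (d : nat -> R) (k : nat) (x : R) : nat -> R :=
  fun j => if Nat.eqb j k then x else d j.

(* s1 = sigma_1^2, s2 = sigma_2^2 *)
Definition term (s1 s2 : R) (alpha beta q : nat -> R) (d : nat -> R) (k : nat) : R :=
  log2 (((1 + alpha k / s1 * q k) * (1 + beta k / s2 * d k))
        / (1 + alpha k / s1 * q k + beta k / s2 * d k)).

Definition ftil (D : nat) (s1 s2 : R) (alpha beta q : nat -> R)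
  (eps : R) (d : nat -> R) : R :=
  (1 - eps) / 2 * rsum D (term s1 s2 alpha beta q d).

Definition gtil (D : nat) (c : R) (eps : R) (d : nat -> R) : R :=
  eps * c - (1 - eps) / 2 * rsum D d.

Definition dmu (s1 s2 : R) (alpha beta q : nat -> R) (mu : R) (k : nat) : R :=
  s2 / (2 * beta k) *
  pos_part (sqrt ((q k * alpha k / s1) ^ 2
                  + 4 * q k * alpha k * beta k * mu / (s1 * s2 * ln 2))
            - q k * alpha k / s1 - 2).

Definition ltil (D : nat) (s1 s2 c : R) (alpha beta q : nat -> R) (mu : R) : R :=
  - (1 / 2) * rsum D (term s1 s2 alpha beta q (dmu s1 s2 alpha beta q mu))
  + 1 / mu * (c + 1 / 2 * rsum D (dmu s1 s2 alpha beta q mu)).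

Definition lagr (D : nat) (s1 s2 c : R) (alpha beta q : nat -> R)
  (nu : R) (lam : nat -> R) (eps : R) (d : nat -> R) : R :=
  ftil D s1 s2 alpha beta q eps d + nu * gtil D c eps d
  + rsum D (fun k => lam k * d k).

From Stdlib Require Import Reals Lra Lia Ranalysis5.
From Coquelicot Require Import Coquelicot.
Open Scope R_scope.

(* Write A_k = alpha_k q_k / sigma_1^2, B_k = beta_k / sigma_2^2 and
   u_k = B_k d_k.  The formula for d_k(mu) makes u_k the water-filling level:
   the nonnegative root of (1 + u)(1 + A_k + u) = A_k B_k mu / ln 2 when there
   is one, and 0 otherwise.  So the marginal rate B_k A_k / (ln 2 (1 + u_k)
   (1 + A_k + u_k)) of every subchannel is at most 1/mu, with equality where
   d_k > 0; the gap is the multiplier lambda_k, which gives dual feasibility,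
   complementary slackness and stationarity in d_k.  Stationarity in eps is
   the equation l(mu) = 0 itself, and the chosen eps makes the energy
   constraint tight.  A root of l exists by the intermediate value theorem:
   l is continuous on (0, oo) and l(mu) >= c/mu - (1/2) sum_k log2 (1 + A_k)
   is positive for small mu, while for large mu the rates stay above a
   positive constant and sum_k d_k(mu) = O(sqrt mu). *)

Lemma rsum_le n f g : (forall j, (j < n)%nat -> f j <= g j) -> rsum n f <= rsum n g.
Proof.
  induction n as [|n IH]; intros Hfg; simpl; [lra|].
  assert (rsum n f <= rsum n g) by (apply IH; intros; apply Hfg; lia).
  assert (f n <= g n) by (apply Hfg; lia).
  lra.
Qed.

Lemma rsum_nonneg n f : (forall j, (j < n)%nat -> 0 <= f j) -> 0 <= rsum n f.
Proof.
  induction n as [|n IH]; intros Hf; simpl; [lra|].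
  assert (0 <= rsum n f) by (apply IH; intros; apply Hf; lia).
  assert (0 <= f n) by (apply Hf; lia).
  lra.
Qed.

Lemma rsum_first_le n f :
  (1 <= n)%nat -> (forall j, (j < n)%nat -> 0 <= f j) -> f O <= rsum n f.
Proof.
  induction n as [|n IH]; intros Hn Hf; [lia|]. simpl.
  destruct n as [|n]; [simpl; lra|].
  assert (f O <= rsum (S n) f) by (apply IH; [lia | intros; apply Hf; lia]).
  assert (0 <= f (S n)) by (apply Hf; lia).
  lra.
Qed.

Lemma rsum_scal n a f : rsum n (fun j => a * f j) = a * rsum n f.
Proof. induction n as [|n IH]; simpl; [ring|]. rewrite IH. ring. Qed.

Lemma rsum_zero n f : (forall j, (j < n)%nat -> f j = 0) -> rsum n f = 0.
Proof.
  induction n as [|n IH]; intros Hf; simpl; [reflexivity|].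
  rewrite IH by (intros; apply Hf; lia). rewrite Hf by lia. ring.
Qed.

Lemma rsum_delta n k a : (k < n)%nat -> rsum n (fun j => if Nat.eqb j k then a else 0) = a.
Proof.
  induction n as [|n IH]; intros Hk; [lia|]. simpl.
  destruct (Nat.eqb_spec n k) as [<-|Hnk].
  - rewrite rsum_zero; [ring|].
    intros j Hj. destruct (Nat.eqb_spec j n); [lia | reflexivity].
  - rewrite IH by lia. ring.
Qed.

Lemma derivable_pt_lim_rsum n (F : R -> nat -> R) (G : nat -> R) x :
  (forall j, (j < n)%nat -> derivable_pt_lim (fun y => F y j) x (G j)) ->
  derivable_pt_lim (fun y => rsum n (F y)) x (rsum n G).
Proof.
  induction n as [|n IH]; intros HF; simpl.
  - apply derivable_pt_lim_const.
  - apply (derivable_pt_lim_plus (fun y => rsum n (F y)) (fun y => F y n)).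
    + apply IH. intros; apply HF; lia.
    + apply HF; lia.
Qed.

Lemma derivable_pt_lim_rsum_upd n (F : nat -> R -> R) (d : nat -> R) k l :
  (k < n)%nat -> derivable_pt_lim (F k) (d k) l ->
  derivable_pt_lim (fun x => rsum n (fun j => F j (upd d k x j))) (d k) l.
Proof.
  intros Hk HF.
  replace l with (rsum n (fun j => if Nat.eqb j k then l else 0)) by (apply rsum_delta; exact Hk).
  apply (derivable_pt_lim_rsum n (fun x j => F j (upd d k x j))).
  intros j _. unfold upd. destruct (Nat.eqb_spec j k) as [->|_].
  - exact HF.
  - apply derivable_pt_lim_const.
Qed.

Lemma continuous_rsum n (F : R -> nat -> R) x :
  (forall j, (j < n)%nat -> continuous (fun y => F y j) x) ->
  continuous (fun y => rsum n (F y)) x.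
Proof.
  induction n as [|n IH]; intros HF; simpl.
  - apply continuous_const.
  - apply (continuous_plus (fun y => rsum n (F y)) (fun y => F y n)).
    + apply IH. intros; apply HF; lia.
    + apply HF; lia.
Qed.

Lemma pos_part_continuous x : continuous pos_part x.
Proof.
  apply continuous_ext with (f := fun y => (y + Rabs y) / 2).
  - intros y. unfold pos_part, Rmax. destruct (Rle_dec 0 y).
    + rewrite Rabs_right by lra. lra.
    + rewrite Rabs_left by lra. lra.
  - apply (continuous_mult (fun y => y + Rabs y) (fun _ => / 2)); [|apply continuous_const].
    apply (continuous_plus (fun y => y) Rabs); [apply continuous_id | apply continuous_Rabs].
Qed.

Lemma ln2_pos : 0 < ln 2.
Proof. rewrite <- ln_1. apply ln_increasing; lra. Qed.

Lemma log2_pos x : 1 < x -> 0 < log2 x.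
Proof.
  intros Hx. unfold log2. apply Rdiv_lt_0_compat; [|exact ln2_pos].
  rewrite <- ln_1. apply ln_increasing; lra.
Qed.

Lemma log2_le x y : 0 < x -> x <= y -> log2 x <= log2 y.
Proof.
  intros Hx Hxy. unfold log2, Rdiv. apply Rmult_le_compat_r.
  - left. apply Rinv_0_lt_compat, ln2_pos.
  - apply ln_le; assumption.
Qed.

Definition rate (A u : R) : R := log2 ((1 + A) * (1 + u) / (1 + A + u)).

Definition rate_slope (A u : R) : R := A / (ln 2 * ((1 + u) * (1 + A + u))).

Lemma log2_1 : log2 1 = 0.
Proof. unfold log2. rewrite ln_1. unfold Rdiv. ring. Qed.

Lemma rate_nonneg A u : 0 <= A -> 0 <= u -> 0 <= rate A u.
Proof.
  intros HA Hu. unfold rate. rewrite <- log2_1.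
  apply log2_le; [lra|]. apply Rcomplements.Rle_div_r; nra.
Qed.

Lemma rate_le A u : 0 <= A -> 0 <= u -> rate A u <= log2 (1 + A).
Proof.
  intros HA Hu. unfold rate. apply log2_le.
  - apply Rdiv_lt_0_compat; nra.
  - apply Rcomplements.Rle_div_l; nra.
Qed.

Lemma rate_ge_large A u : 0 <= A -> 1 + A <= u -> log2 (1 + A / 2) <= rate A u.
Proof.
  intros HA Hu. unfold rate. apply log2_le; [lra|].
  apply Rcomplements.Rle_div_r; nra.
Qed.

Lemma derivable_pt_lim_rate A B x : 0 <= A -> 0 <= B -> 0 <= x ->
  derivable_pt_lim (fun y => rate A (B * y)) x (B * rate_slope A (B * x)).
Proof.
  intros HA HB Hx. pose proof ln2_pos. apply is_derive_Reals. unfold rate, rate_slope, log2.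
  assert (0 <= B * x) by nra.
  auto_derive.
  - repeat split; try lra. apply Rdiv_lt_0_compat; nra.
  - field. repeat split; lra.
Qed.

(* The nonnegative root u of (1 + u)(1 + A + u) = Y when Y > 1 + A, and 0
   otherwise: the water-filling level of one subchannel. *)
Definition wroot (A Y : R) : R := pos_part (sqrt (A ^ 2 + 4 * Y) - A - 2) / 2.

Lemma wroot_nonneg A Y : 0 <= wroot A Y.
Proof. unfold wroot, pos_part. pose proof (Rmax_l 0 (sqrt (A ^ 2 + 4 * Y) - A - 2)). lra. Qed.

Lemma wroot_pos_eq A Y : 0 <= A -> 0 <= Y -> 0 < wroot A Y ->
  (1 + wroot A Y) * (1 + A + wroot A Y) = Y.
Proof.
  intros HA HY. unfold wroot, pos_part.
  pose proof (sqrt_sqrt (A ^ 2 + 4 * Y) ltac:(nra)) as Hs.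
  destruct (Rle_dec (sqrt (A ^ 2 + 4 * Y) - A - 2) 0).
  - rewrite Rmax_left by lra. lra.
  - rewrite Rmax_right by lra. intros _. nra.
Qed.

Lemma wroot_eq0_le A Y : 0 <= A -> 0 <= Y -> wroot A Y = 0 -> Y <= 1 + A.
Proof.
  intros HA HY. unfold wroot, pos_part.
  pose proof (sqrt_sqrt (A ^ 2 + 4 * Y) ltac:(nra)) as Hs.
  pose proof (sqrt_pos (A ^ 2 + 4 * Y)).
  destruct (Rle_dec (sqrt (A ^ 2 + 4 * Y) - A - 2) 0).
  - intros _. nra.
  - rewrite Rmax_right by lra. lra.
Qed.

Lemma wroot_sqr_le A Y : 0 <= A -> 0 <= Y -> wroot A Y * wroot A Y <= Y.
Proof.
  intros HA HY. pose proof (wroot_nonneg A Y) as Hu.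
  destruct (Rle_lt_or_eq_dec 0 (wroot A Y) Hu) as [Hpos|Hzero].
  - pose proof (wroot_pos_eq A Y HA HY Hpos). nra.
  - rewrite <- Hzero. lra.
Qed.

Lemma wroot_ge_large A Y : 0 <= A -> 2 * (A + 1) * (A + 2) <= Y -> 1 + A <= wroot A Y.
Proof.
  intros HA HY. assert (HY0 : 0 <= Y) by nra.
  pose proof (wroot_nonneg A Y) as Hu.
  destruct (Rle_lt_or_eq_dec 0 (wroot A Y) Hu) as [Hpos|Hzero].
  - pose proof (wroot_pos_eq A Y HA HY0 Hpos). nra.
  - pose proof (wroot_eq0_le A Y HA HY0 (eq_sym Hzero)). nra.
Qed.

Lemma rate_slope_wroot_eq A Y : 0 <= A -> 0 <= Y -> 0 < wroot A Y ->
  rate_slope A (wroot A Y) = A / (ln 2 * Y).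
Proof. intros HA HY Hpos. unfold rate_slope. rewrite (wroot_pos_eq A Y HA HY Hpos). reflexivity. Qed.

Lemma rate_slope_wroot_le A Y : 0 <= A -> 0 < Y -> rate_slope A (wroot A Y) <= A / (ln 2 * Y).
Proof.
  intros HA HY. pose proof ln2_pos. pose proof (wroot_nonneg A Y) as Hu.
  destruct (Rle_lt_or_eq_dec 0 (wroot A Y) Hu) as [Hpos|Hzero].
  - rewrite rate_slope_wroot_eq by lra. lra.
  - pose proof (wroot_eq0_le A Y HA ltac:(lra) (eq_sym Hzero)).
    unfold rate_slope. rewrite <- Hzero. unfold Rdiv.
    apply Rmult_le_compat_l; [exact HA|].
    apply Rinv_le_contravar; [nra|]. nra.
Qed.

Lemma wroot_continuous A Y : 0 < A ^ 2 + 4 * Y -> continuous (wroot A) Y.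
Proof.
  intros HY. unfold wroot.
  apply (continuous_mult (fun y => pos_part (sqrt (A ^ 2 + 4 * y) - A - 2)) (fun _ => / 2));
    [|apply continuous_const].
  apply (continuous_comp (fun y => sqrt (A ^ 2 + 4 * y) - A - 2) pos_part);
    [|apply pos_part_continuous].
  apply (ex_derive_continuous (K := R_AbsRing) (V := R_NormedModule)).
  auto_derive. exact HY.
Qed.

Lemma rate_continuous A u : 0 <= A -> 0 <= u -> continuous (rate A) u.
Proof.
  intros HA Hu. pose proof ln2_pos.
  apply (ex_derive_continuous (K := R_AbsRing) (V := R_NormedModule)).
  unfold rate, log2. auto_derive. repeat split; try lra. apply Rdiv_lt_0_compat; nra.
Qed.

Lemma tight_eps_bounds c S : 0 < c -> 0 <= S -> 0 <= S / (2 * c + S) < 1.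
Proof.
  intros Hc HS. split.
  - apply Rdiv_le_0_compat; lra.
  - apply Rcomplements.Rlt_div_l; lra.
Qed.

Lemma gtil_tight D c x : 0 < c -> 0 <= rsum D x ->
  gtil D c (rsum D x / (2 * c + rsum D x)) x = 0.
Proof. intros Hc HS. unfold gtil. field. lra. Qed.

Lemma lagr_derive_eps D s1 s2 c alpha beta q nu lam e x :
  derivable_pt_lim (fun t => lagr D s1 s2 c alpha beta q nu lam t x) e
    (- (1 / 2) * rsum D (term s1 s2 alpha beta q x) + nu * (c + 1 / 2 * rsum D x)).
Proof. apply is_derive_Reals. unfold lagr, ftil, gtil. auto_derive; [exact I|]. field. Qed.

Section WaterFilling.

Variables (D : nat) (s1 s2 c : R) (alpha beta q : nat -> R).
Hypotheses (HD : (1 <= D)%nat) (Hs1 : 0 < s1) (Hs2 : 0 < s2) (Hc : 0 < c)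
  (Hpar : forall k, (k < D)%nat -> 0 < alpha k /\ 0 < beta k /\ 0 < q k).

Local Notation A k := (alpha k / s1 * q k).
Local Notation B k := (beta k / s2).
Local Notation level k mu := (A k * B k * mu / ln 2).
Local Notation rho k := (A k / (B k * ln 2)).
Local Notation dk := (dmu s1 s2 alpha beta q).
Local Notation l := (ltil D s1 s2 c alpha beta q).

Lemma A_pos k : (k < D)%nat -> 0 < A k.
Proof.
  intros Hk. destruct (Hpar k Hk) as (Ha & _ & Hq).
  apply Rmult_lt_0_compat; [apply Rdiv_lt_0_compat|]; assumption.
Qed.

Lemma B_pos k : (k < D)%nat -> 0 < B k.
Proof. intros Hk. destruct (Hpar k Hk) as (_ & Hb & _). apply Rdiv_lt_0_compat; assumption. Qed.

Lemma level_pos k mu : (k < D)%nat -> 0 < mu -> 0 < level k mu.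
Proof.
  intros Hk Hmu. pose proof (A_pos k Hk). pose proof (B_pos k Hk).
  apply Rdiv_lt_0_compat; [|exact ln2_pos].
  apply Rmult_lt_0_compat; [apply Rmult_lt_0_compat|]; assumption.
Qed.

Lemma dmu_wroot k mu : (k < D)%nat -> B k * dk mu k = wroot (A k) (level k mu).
Proof.
  intros Hk. destruct (Hpar k Hk) as (Ha & Hb & Hq). pose proof ln2_pos.
  unfold dmu, wroot.
  replace ((alpha k / s1 * q k) ^ 2 + 4 * (alpha k / s1 * q k * (beta k / s2) * mu / ln 2))
    with ((q k * alpha k / s1) ^ 2 + 4 * q k * alpha k * beta k * mu / (s1 * s2 * ln 2))
    by (field; lra).
  replace (alpha k / s1 * q k) with (q k * alpha k / s1) by (field; lra).
  field. lra.
Qed.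

Lemma dmu_nonneg k mu : (k < D)%nat -> 0 <= dk mu k.
Proof.
  intros Hk. pose proof (dmu_wroot k mu Hk). pose proof (B_pos k Hk).
  pose proof (wroot_nonneg (A k) (level k mu)). nra.
Qed.

Lemma dmu_continuous k mu : (k < D)%nat -> 0 < mu -> continuous (fun m => dk m k) mu.
Proof.
  intros Hk Hmu. pose proof (A_pos k Hk). pose proof (B_pos k Hk). pose proof ln2_pos.
  apply continuous_ext with (f := fun m => / B k * wroot (A k) (level k m)).
  { intros m. rewrite <- (dmu_wroot k m Hk), <- Rmult_assoc, Rinv_l, Rmult_1_l; [reflexivity | lra]. }
  apply (continuous_mult (fun _ => / B k)); [apply continuous_const|].
  apply (continuous_comp (fun m => level k m) (wroot (A k))).
  - apply (ex_derive_continuous (K := R_AbsRing) (V := R_NormedModule)).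
    auto_derive. lra.
  - apply wroot_continuous. pose proof (level_pos k mu Hk Hmu). nra.
Qed.

Lemma term_eq_rate x k : term s1 s2 alpha beta q x k = rate (A k) (B k * x k).
Proof. reflexivity. Qed.

Lemma ltil_continuous mu : 0 < mu -> continuous l mu.
Proof.
  intros Hmu. unfold ltil.
  apply (continuous_plus
    (fun m => - (1 / 2) * rsum D (term s1 s2 alpha beta q (dk m)))
    (fun m => 1 / m * (c + 1 / 2 * rsum D (dk m)))).
  - apply (continuous_mult (fun _ => - (1 / 2))); [apply continuous_const|].
    apply continuous_rsum. intros k Hk.
    apply (continuous_comp (fun m => B k * dk m k) (rate (A k))).
    + apply (continuous_mult (fun _ => B k)); [apply continuous_const|].
      apply dmu_continuous; assumption.
    + pose proof (A_pos k Hk). pose proof (B_pos k Hk). pose proof (dmu_nonneg k mu Hk).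
      apply rate_continuous; nra.
  - apply (continuous_mult (fun m => 1 / m)).
    + apply (ex_derive_continuous (K := R_AbsRing) (V := R_NormedModule)).
      auto_derive. lra.
    + apply (continuous_plus (fun _ => c)); [apply continuous_const|].
      apply (continuous_mult (fun _ => 1 / 2)); [apply continuous_const|].
      apply continuous_rsum. intros k Hk. apply dmu_continuous; assumption.
Qed.

Lemma ltil_pos_small : exists m0, 0 < m0 /\ 0 < l m0.
Proof.
  set (L := rsum D (fun k => log2 (1 + A k))).
  assert (HL : 0 <= L).
  { apply rsum_nonneg. intros k Hk. pose proof (A_pos k Hk). left. apply log2_pos. lra. }
  set (m0 := c / (L / 2 + 1)).
  exists m0. split; [apply Rdiv_lt_0_compat; lra|].
  assert (St : rsum D (term s1 s2 alpha beta q (dk m0)) <= L).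
  { apply rsum_le. intros k Hk. rewrite term_eq_rate.
    pose proof (A_pos k Hk). pose proof (B_pos k Hk). pose proof (dmu_nonneg k m0 Hk).
    apply rate_le; nra. }
  assert (Sd : 0 <= rsum D (dk m0)).
  { apply rsum_nonneg. intros k Hk. apply dmu_nonneg; exact Hk. }
  unfold ltil. replace (1 / m0) with ((L / 2 + 1) / c) by (unfold m0; field; lra).
  assert (0 <= (L / 2 + 1) / c * (1 / 2 * rsum D (dk m0))).
  { apply Rmult_le_pos; [apply Rdiv_le_0_compat|]; lra. }
  replace ((L / 2 + 1) / c * (c + 1 / 2 * rsum D (dk m0)))
    with (L / 2 + 1 + (L / 2 + 1) / c * (1 / 2 * rsum D (dk m0))) by (field; lra).
  lra.
Qed.

Lemma dmu_sqr_le k mu : (k < D)%nat -> 0 <= mu -> dk mu k * dk mu k <= rho k * mu.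
Proof.
  intros Hk Hmu. destruct (Hpar k Hk) as (Ha & Hb & Hq).
  pose proof (A_pos k Hk). pose proof (B_pos k Hk). pose proof ln2_pos.
  assert (Hlev : 0 <= level k mu).
  { apply Rdiv_le_0_compat; [|lra]. apply Rmult_le_pos; nra. }
  pose proof (wroot_sqr_le (A k) (level k mu) ltac:(lra) Hlev) as Hw.
  rewrite <- (dmu_wroot k mu Hk) in Hw.
  apply Rmult_le_reg_l with (B k * B k); [nra|].
  replace (B k * B k * (rho k * mu)) with (level k mu) by (field; repeat split; lra).
  nra.
Qed.

Lemma rsum_dmu_le M : 0 <= M ->
  rsum D (dk (M * M)) <= M * rsum D (fun k => (rho k + 1) / 2).
Proof.
  intros HM. rewrite <- rsum_scal. apply rsum_le. intros k Hk.
  pose proof (A_pos k Hk). pose proof (B_pos k Hk). pose proof ln2_pos.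
  assert (Hrho : 0 <= rho k) by (left; apply Rdiv_lt_0_compat; nra).
  pose proof (dmu_sqr_le k (M * M) Hk ltac:(nra)).
  set (X := M * ((rho k + 1) / 2)).
  assert (HX : 0 <= X) by (unfold X; nra).
  assert (Hamgm : rho k * (M * M) <= X * X).
  { unfold X. pose proof (Rle_0_sqr (M * (rho k - 1))). unfold Rsqr in *. nra. }
  apply Rsqr_incr_0_var; [unfold Rsqr; lra | exact HX].
Qed.

Lemma rsum_term_ge mu : 2 * (A O + 1) * (A O + 2) <= level O mu ->
  log2 (1 + A O / 2) <= rsum D (term s1 s2 alpha beta q (dk mu)).
Proof.
  intros Hlev. pose proof (A_pos O HD).
  apply Rle_trans with (term s1 s2 alpha beta q (dk mu) O).
  - rewrite term_eq_rate, (dmu_wroot O mu HD).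
    apply rate_ge_large; [lra|]. apply wroot_ge_large; [lra | exact Hlev].
  - apply rsum_first_le; [exact HD|]. intros k Hk. rewrite term_eq_rate.
    pose proof (A_pos k Hk). pose proof (B_pos k Hk). pose proof (dmu_nonneg k mu Hk).
    apply rate_nonneg; nra.
Qed.

Lemma ltil_eventually_neg m0 : exists mu, m0 < mu /\ l mu < 0.
Proof.
  pose proof (A_pos O HD). pose proof (B_pos O HD). pose proof ln2_pos.
  set (K := rsum D (fun k => (rho k + 1) / 2)).
  assert (HK : 0 <= K).
  { apply rsum_nonneg. intros k Hk. pose proof (A_pos k Hk). pose proof (B_pos k Hk).
    assert (0 < rho k) by (apply Rdiv_lt_0_compat; nra). lra. }
  set (t0 := log2 (1 + A O / 2)).
  assert (Ht0 : 0 < t0) by (apply log2_pos; lra).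
  (* beyond [mu_act] subchannel 0 is active with relay SNR at least 1 + A 0 *)
  set (mu_act := 2 * (A O + 1) * (A O + 2) * ln 2 / (A O * B O)).
  assert (Hact : 0 < mu_act).
  { apply Rdiv_lt_0_compat; [|apply Rmult_lt_0_compat; lra].
    repeat apply Rmult_lt_0_compat; lra. }
  set (r := (2 * c + K) / t0).
  assert (Hr : 2 * c + K = t0 * r) by (unfold r; field; lra).
  assert (0 <= r) by (apply Rdiv_le_0_compat; lra).
  set (M := 1 + r + mu_act + Rabs m0).
  pose proof (Rle_abs m0). pose proof (Rabs_pos m0).
  assert (HM : 1 <= M) by (unfold M; lra).
  assert (Hm0M : m0 < M) by (unfold M; lra).
  exists (M * M). split; [nra|].
  assert (Sd : rsum D (dk (M * M)) <= M * K)
    by (apply rsum_dmu_le; lra).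
  assert (St : t0 <= rsum D (term s1 s2 alpha beta q (dk (M * M)))).
  { apply rsum_term_ge.
    replace (2 * (A O + 1) * (A O + 2)) with (A O * B O * mu_act / ln 2) by (unfold mu_act; field; nra).
    unfold Rdiv. apply Rmult_le_compat_r; [left; apply Rinv_0_lt_compat; lra|].
    apply Rmult_le_compat_l; [nra|]. unfold M. nra. }
  assert (0 <= rsum D (dk (M * M))).
  { apply rsum_nonneg. intros k Hk. apply dmu_nonneg; exact Hk. }
  assert (Hpow : 1 / (M * M) * (c + 1 / 2 * rsum D (dk (M * M))) < t0 / 2).
  { apply Rmult_lt_reg_l with (M * M); [nra|].
    rewrite <- Rmult_assoc, Rmult_div_assoc, Rmult_1_r, Rdiv_diag, Rmult_1_l by nra.
    assert (r < M) by (unfold M; lra).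
    assert (c + 1 / 2 * rsum D (dk (M * M)) <= M * (c + K / 2)) by nra.
    assert (M * (c + K / 2) < M * M * (t0 / 2)) by nra.
    lra. }
  unfold ltil. lra.
Qed.

Lemma ltil_has_root : exists mu, 0 < mu /\ l mu = 0.
Proof.
  destruct ltil_pos_small as (m0 & Hm0 & Hpos).
  destruct (ltil_eventually_neg m0) as (m1 & Hm01 & Hneg).
  destruct (IVT_interv (fun mu => - l mu) m0 m1) as (z & Hz & Hlz).
  - intros a Ha. apply continuity_pt_filterlim.
    apply (continuous_opp l). apply ltil_continuous. lra.
  - exact Hm01.
  - lra.
  - lra.
  - exists z. split; lra.
Qed.

Lemma marginal_rate_le k mu : (k < D)%nat -> 0 < mu ->
  B k * rate_slope (A k) (B k * dk mu k) <= / mu.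
Proof.
  intros Hk Hmu. destruct (Hpar k Hk) as (Ha & Hb & Hq).
  pose proof (A_pos k Hk). pose proof (B_pos k Hk). pose proof ln2_pos.
  pose proof (level_pos k mu Hk Hmu).
  replace (/ mu) with (B k * (A k / (ln 2 * level k mu))) by (field; repeat split; lra).
  rewrite (dmu_wroot k mu Hk).
  apply Rmult_le_compat_l; [lra|]. apply rate_slope_wroot_le; lra.
Qed.

Lemma marginal_rate_eq k mu : (k < D)%nat -> 0 < mu -> 0 < dk mu k ->
  B k * rate_slope (A k) (B k * dk mu k) = / mu.
Proof.
  intros Hk Hmu Hd. destruct (Hpar k Hk) as (Ha & Hb & Hq).
  pose proof (A_pos k Hk). pose proof (B_pos k Hk). pose proof ln2_pos.
  pose proof (level_pos k mu Hk Hmu).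
  assert (Hact : 0 < wroot (A k) (level k mu)) by (rewrite <- (dmu_wroot k mu Hk); nra).
  rewrite (dmu_wroot k mu Hk), rate_slope_wroot_eq by lra.
  field. repeat split; lra.
Qed.

Lemma lagr_derive_coord nu lam e x k : (k < D)%nat -> 0 <= x k ->
  derivable_pt_lim (fun y => lagr D s1 s2 c alpha beta q nu lam e (upd x k y)) (x k)
    ((1 - e) / 2 * (B k * rate_slope (A k) (B k * x k)) - nu * ((1 - e) / 2 * 1) + lam k).
Proof.
  intros Hk Hx. pose proof (A_pos k Hk). pose proof (B_pos k Hk).
  unfold lagr, ftil, gtil.
  set (a := (1 - e) / 2).
  assert (Hf : derivable_pt_lim (fun y => rsum D (term s1 s2 alpha beta q (upd x k y))) (x k)
                 (B k * rate_slope (A k) (B k * x k))).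
  { apply (derivable_pt_lim_rsum_upd D (fun j y => rate (A j) (B j * y))); [exact Hk|].
    apply derivable_pt_lim_rate; lra. }
  assert (Hg : derivable_pt_lim (fun y => rsum D (upd x k y)) (x k) 1).
  { apply (derivable_pt_lim_rsum_upd D (fun _ y => y)); [exact Hk|]. apply derivable_pt_lim_id. }
  assert (Hh : derivable_pt_lim (fun y => rsum D (fun j => lam j * upd x k y j)) (x k) (lam k)).
  { apply (derivable_pt_lim_rsum_upd D (fun j y => lam j * y)); [exact Hk|].
    apply is_derive_Reals. auto_derive; [exact I | ring]. }
  replace (a * (B k * rate_slope (A k) (B k * x k)) - nu * (a * 1) + lam k)
    with (a * (B k * rate_slope (A k) (B k * x k)) + nu * (0 - a * 1) + lam k) by ring.
  apply (derivable_pt_lim_plus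
    (fun y => a * rsum D (term s1 s2 alpha beta q (upd x k y))
              + nu * (e * c - a * rsum D (upd x k y)))
    (fun y => rsum D (fun j => lam j * upd x k y j))); [|exact Hh].
  apply (derivable_pt_lim_plus
    (fun y => a * rsum D (term s1 s2 alpha beta q (upd x k y)))
    (fun y => nu * (e * c - a * rsum D (upd x k y)))).
  - exact (derivable_pt_lim_scal _ a _ _ Hf).
  - apply (derivable_pt_lim_scal (fun y => e * c - a * rsum D (upd x k y))).
    apply (derivable_pt_lim_minus (fun _ => e * c) (fun y => a * rsum D (upd x k y))).
    + apply derivable_pt_lim_const.
    + exact (derivable_pt_lim_scal _ a _ _ Hg).
Qed.

Lemma kkt_at_ltil_root mu : 0 < mu -> l mu = 0 ->
  let d := dk mu in
  let eps := rsum D d / (2 * c + rsum D d) in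
  let nu := / mu in
  ((forall k, (k < D)%nat -> 0 <= d k) /\ 0 <= eps <= 1 /\ 0 <= gtil D c eps d) /\
  gtil D c eps d = 0 /\
  exists lam : nat -> R,
    (forall k, (k < D)%nat -> 0 <= lam k /\ lam k * d k = 0) /\
    0 <= nu /\ nu * gtil D c eps d = 0 /\
    derivable_pt_lim (fun e => lagr D s1 s2 c alpha beta q nu lam e d) eps 0 /\
    (forall k, (k < D)%nat ->
       derivable_pt_lim (fun x => lagr D s1 s2 c alpha beta q nu lam eps (upd d k x)) (d k) 0).
Proof.
  intros Hmu Hroot d eps nu.
  assert (Hd : forall k, (k < D)%nat -> 0 <= d k) by (intros k Hk; apply dmu_nonneg; exact Hk).
  assert (HS : 0 <= rsum D d) by (apply rsum_nonneg; exact Hd).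
  pose proof (tight_eps_bounds c (rsum D d) Hc HS) as Heps. fold eps in Heps.
  pose proof (gtil_tight D c d Hc HS) as Hg. fold eps in Hg.
  assert (Hnu : 0 < nu) by (apply Rinv_0_lt_compat; exact Hmu).
  split; [repeat split; auto; lra|]. split; [exact Hg|].
  exists (fun k => (1 - eps) / 2 * (nu - B k * rate_slope (A k) (B k * d k))).
  split; [|split; [lra | split; [rewrite Hg; ring | split]]].
  - intros k Hk. pose proof (marginal_rate_le k mu Hk Hmu) as Hle. fold d nu in Hle. split.
    + apply Rmult_le_pos; lra.
    + destruct (Rle_lt_or_eq_dec 0 (d k) (Hd k Hk)) as [Hpos|Hzero].
      * pose proof (marginal_rate_eq k mu Hk Hmu Hpos) as Heq. fold d nu in Heq.
        rewrite Heq. ring.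
      * rewrite <- Hzero. ring.
  - replace 0 with (- (1 / 2) * rsum D (term s1 s2 alpha beta q d) + nu * (c + 1 / 2 * rsum D d)).
    + apply lagr_derive_eps.
    + rewrite <- Hroot. unfold ltil, nu, d. field. lra.
  - intros k Hk.
    replace 0 with ((1 - eps) / 2 * (B k * rate_slope (A k) (B k * d k)) - nu * ((1 - eps) / 2 * 1)
      + (fun j => (1 - eps) / 2 * (nu - B j * rate_slope (A j) (B j * d j))) k)
      by (cbv beta; ring).
    apply lagr_derive_coord; [exact Hk | exact (Hd k Hk)].
Qed.

End WaterFilling.

Theorem mainTheorem2 (D : nat) (s1 s2 c : R) (alpha beta q : nat -> R) :
  (1 <= D)%nat -> 0 < s1 -> 0 < s2 -> 0 < c ->
  (forall k, (k < D)%nat -> 0 < alpha k /\ 0 < beta k /\ 0 < q k) ->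
  (exists mu, 0 < mu /\ ltil D s1 s2 c alpha beta q mu = 0) /\
  (forall mu, 0 < mu -> ltil D s1 s2 c alpha beta q mu = 0 ->
     let d := dmu s1 s2 alpha beta q mu in
     let eps := rsum D d / (2 * c + rsum D d) in
     let nu := / mu in
     (* primal feasibility *)
     ((forall k, (k < D)%nat -> 0 <= d k) /\ 0 <= eps <= 1 /\
      0 <= gtil D c eps d) /\
     gtil D c eps d = 0 /\
     exists lam : nat -> R,
       (* dual feasibility and complementary slackness *)
       (forall k, (k < D)%nat -> 0 <= lam k /\ lam k * d k = 0) /\
       0 <= nu /\ nu * gtil D c eps d = 0 /\
       (* stationarity of the Lagrangian *)
       derivable_pt_lim (fun e => lagr D s1 s2 c alpha beta q nu lam e d) eps 0 /\
       (forall k, (k < D)%nat ->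
          derivable_pt_lim (fun x => lagr D s1 s2 c alpha beta q nu lam eps (upd d k x))
            (d k) 0)).
Proof.
  intros HD Hs1 Hs2 Hc Hpar. split.
  - apply ltil_has_root; assumption.
  - intros mu. apply kkt_at_ltil_root; assumption.
Qed.
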